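(* Let $p$ be an odd prime, let $M,S$ be integers with $0\leq S<M$, and let $\zeta$ be a primitive $p^M$-th root of unity. Then for every integer $k$ with $(k,p)=1$ and $0\leq k<p^S$, $$\sum_{i=0}^{p^S-1}\zeta^{(1+kp^{M-S})^i}=0.$$ *)

From mathcomp Require Import all_boot all_order all_algebra all_field.

(* Write a = 1 + k p^(M-S).  Lifting the exponent (p odd, p does not divide k) gives
   a^n - 1 = v p^(M-S+log_p n) with v prime to p, so p^M divides a^n - 1 exactly when
   p^S divides n.  Hence the p^S numbers a^i - 1 (i < p^S) are distinct modulo p^M and
   all divisible by p^(M-S): the zeta^(a^i - 1) are the p^S distinct p^S-th roots of
   unity, whose sum is 0, and the sum in question is zeta times this sum. *)

From mathcomp Require Import all_boot all_order all_algebra all_field.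
From mathcomp Require Import ring.

Set Implicit Arguments.
Unset Strict Implicit.

Lemma expn1D_cube_rem (x m : nat) :
  exists r, (1 + x) ^ m = 1 + m * x + 'C(m, 2) * x ^ 2 + x ^ 3 * r.
Proof.
elim: m => [|m [r IHm]]; first by exists 0; rewrite expn0 bin0n /=; ring.
by exists ('C(m, 2) + r + x * r); rewrite expnS IHm binS bin1; ring.
Qed.

Lemma expn1D_sq_rem (x m : nat) : exists s, (1 + x) ^ m = 1 + m * x + x ^ 2 * s.
Proof. by have [r ->] := expn1D_cube_rem x m; exists ('C(m, 2) + x * r); ring. Qed.

Lemma coprime_addMr (p u w : nat) : coprime (u + p * w) p = coprime u p.
Proof. by rewrite -coprime_modl addnC mulnC modnMDl coprime_modl. Qed.

Lemma expn_coprime_lift (p f u m : nat) : 0 < f -> coprime u p -> coprime m p ->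
  exists2 v, coprime v p & (1 + u * p ^ f) ^ m = 1 + v * p ^ f.
Proof.
case: f => // g _ u_p m_p; have [s ->] := expn1D_sq_rem (u * p ^ g.+1) m.
exists (m * u + p * (u ^ 2 * p ^ g * s)); first by rewrite coprime_addMr coprimeMl m_p.
by rewrite expnS; ring.
Qed.

Section LiftingTheExponent.

Variable p : nat.
Hypotheses (p_pr : prime p) (p_odd : odd p).

(* The only use of oddness: p divides 'C(p, 2). *)
Lemma expn_p_lift (f u : nat) : 0 < f -> coprime u p ->
  exists2 v, coprime v p & (1 + u * p ^ f) ^ p = 1 + v * p ^ f.+1.
Proof.
case: f => // g _ u_p; have [r ->] := expn1D_cube_rem (u * p ^ g.+1) p.
exists (u + p * (p.-1./2 * u ^ 2 * p ^ g + u ^ 3 * r * (p ^ g) ^ 2));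
  first by rewrite coprime_addMr.
by rewrite bin2odd // !expnS; ring.
Qed.

Lemma expn_pexp_lift (f u t : nat) : 0 < f -> coprime u p ->
  exists2 v, coprime v p & (1 + u * p ^ f) ^ (p ^ t) = 1 + v * p ^ (f + t).
Proof.
move=> f_gt0 u_p; elim: t => [|t [v v_p IHt]]; first by exists u; rewrite ?addn0.
have [w w_p Ew] := expn_p_lift (ltn_addr t f_gt0) v_p.
by exists w; rewrite // expnSr expnM IHt Ew addnS.
Qed.

Lemma expn_lift (f u n : nat) : 0 < f -> coprime u p -> 0 < n ->
  exists2 v, coprime v p & (1 + u * p ^ f) ^ n = 1 + v * p ^ (f + logn p n).
Proof.
move=> f_gt0 u_p n_gt0; have [m p_m {1}->] := pfactor_coprime p_pr n_gt0.
have [v v_p Ev] := expn_pexp_lift (logn p n) f_gt0 u_p.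
rewrite coprime_sym in p_m.
have [w w_p Ew] := expn_coprime_lift (ltn_addr (logn p n) f_gt0) v_p p_m.
by exists w; rewrite // [m * _]mulnC expnM Ev Ew.
Qed.

Lemma pfactor_dvdn_expn_sub1 (f u S n : nat) : 0 < f -> coprime u p ->
  (p ^ (f + S) %| (1 + u * p ^ f) ^ n - 1) = (p ^ S %| n).
Proof.
move=> f_gt0 u_p; have [->|n_gt0] := posnP n; first by rewrite subnn !dvdn0.
have [v v_p ->] := expn_lift f_gt0 u_p n_gt0.
rewrite addKn Gauss_dvdr; last by rewrite coprimeXl // coprime_sym.
by rewrite dvdn_Pexp2l ?prime_gt1 // leq_add2l pfactor_dvdn.
Qed.

Lemma expn_mod_pfactor_inj (f u S i j : nat) : 0 < f -> coprime u p ->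
  i < p ^ S -> j < p ^ S ->
  (1 + u * p ^ f) ^ i = (1 + u * p ^ f) ^ j %[mod p ^ (f + S)] -> i = j.
Proof.
move=> f_gt0 u_p; wlog le_ij : i j / i <= j.
  move=> IH iS jS eq_ij; have [/IH|/ltnW/IH] := leqP i j; first exact.
  by move=> /(_ jS iS (esym eq_ij)).
move=> _ jS; set a := 1 + u * p ^ f.
have a_gt0 : 0 < a by rewrite /a addnC addn1.
have p_a : coprime p a.
  by rewrite coprime_sym /a -(prednK f_gt0) expnS mulnCA coprime_addMr coprime1n.
rewrite -{1}(subnKC le_ij) (expnD a) -{1}[a ^ i]muln1 => /eqP; rewrite eq_sym.
rewrite eqn_mod_dvd ?leq_mul2l ?expn_gt0 ?a_gt0 ?orbT // -mulnBr.
rewrite Gauss_dvdr ?coprimeXl ?coprimeXr // pfactor_dvdn_expn_sub1 //.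
have [/eqP|ij_gt0 /(dvdn_leq ij_gt0)] := posnP (j - i).
  by rewrite subn_eq0 => le_ji _; apply/eqP; rewrite eqn_leq le_ij.
by rewrite leqNgt (leq_ltn_trans (leq_subr i j) jS).
Qed.

End LiftingTheExponent.

Import GRing.Theory.
Local Open Scope ring_scope.

Lemma sum_distinct_roots_of_unity (R : fieldType) (N : nat) (w : R) (x : 'I_N -> R) :
  (1 < N)%N -> N.-primitive_root w -> injective x -> (forall i, x i ^+ N = 1) ->
  \sum_(i < N) x i = 0.
Proof.
move=> N_gt1 w_prim x_inj x_root.
pose h i := sval (prim_rootP w_prim (x_root i)).
have xE i : x i = w ^+ h i := svalP (prim_rootP w_prim (x_root i)).
have h_inj : injective h by move=> i j eq_h; apply: x_inj; rewrite !xE eq_h.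
have -> : \sum_(i < N) x i = \sum_(i < N) w ^+ i.
  by rewrite [RHS](reindex_inj h_inj); apply: eq_bigr => i _; rewrite xE.
have w_neq1 : w != 1.
  by rewrite -[w]expr1 -(prim_order_dvd w_prim) dvdn1 neq_ltn N_gt1 orbT.
move: (expfS_eq1 w N.-1); rewrite prednK ?(ltnW N_gt1) // prim_expr_order //.
by rewrite eqxx (negbTE w_neq1) => /esym/eqP.
Qed.

Theorem lemma5p1 (p M S : nat) (zeta : algC) :
  prime p -> odd p -> (S < M)%N ->
  (p ^ M)%N.-primitive_root zeta ->
  forall k : nat, coprime k p -> (k < p ^ S)%N ->
  \sum_(0 <= i < p ^ S) zeta ^+ ((1 + k * p ^ (M - S)) ^ i)%N = 0.
Proof.
move=> p_pr p_odd lt_SM zeta_prim k k_p lt_k_pS.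
set f := (M - S)%N; set a := (1 + k * p ^ f)%N.
have f_gt0 : (0 < f)%N by rewrite subn_gt0.
have M_fS : M = (f + S)%N by rewrite subnK // ltnW.
have k_gt0 : (0 < k)%N.
  by rewrite lt0n; apply: contraTneq k_p => ->; rewrite /coprime gcd0n neq_ltn prime_gt1 ?orbT.
have pS_gt1 : (1 < p ^ S)%N := leq_ltn_trans k_gt0 lt_k_pS.
have w_prim : (p ^ S).-primitive_root (zeta ^+ (p ^ f)%N).
  have := dvdn_prim_root zeta_prim (dvdn_exp2l p (ltnW lt_SM)).
  by rewrite M_fS expnD mulnK ?expn_gt0 ?prime_gt0.
have a_pow_gt0 i : (0 < a ^ i)%N by rewrite expn_gt0 /a addnC addn1.
transitivity (zeta * \sum_(i < p ^ S) zeta ^+ (a ^ i - 1)).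
  by rewrite big_mkord mulr_sumr; apply: eq_bigr => i _; rewrite -exprS subn1 prednK.
rewrite (sum_distinct_roots_of_unity pS_gt1 w_prim) ?mulr0 //.
  move=> i j /eqP; rewrite (eq_prim_root_expr zeta_prim) -(eqn_modDr 1) !subnK //.
  rewrite M_fS => /eqP /(expn_mod_pfactor_inj p_pr p_odd f_gt0 k_p (ltn_ord i) (ltn_ord j)).
  exact: val_inj.
move=> i; rewrite -exprM; apply/eqP; rewrite -(prim_order_dvd zeta_prim) M_fS expnD.
have := pfactor_dvdn_expn_sub1 p_pr p_odd 0 i f_gt0 k_p.
rewrite addn0 expn0 dvd1n => pf_dvd_ai_sub1.
by rewrite dvdn_pmul2r ?expn_gt0 ?prime_gt0.
Qed.
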